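(* Let $X$ be a connected compact metrizable space and let $\Delta:\mathrm{C}^+_1(X)\to(0,1]$ be an order-preserving map. Then for every finite set $\mathcal F\subseteq\mathrm{C}(X)$ and every $\varepsilon>0$ there exist finite sets $\mathcal H_0,\mathcal H_1\subseteq\mathrm{C}^+_1(X)$, with $\mathcal H_0$ consisting of nonzero functions, and $\delta>0$ with the following property. Whenever $n,k,d\ge1$, $\pi_1,\dots,\pi_n:X^d\to X$ are coordinate projections (repetitions allowed), $x_1,\dots,x_k,y_1,\dots,y_k\in X$, and $\phi_0,\phi_1:\mathrm{C}(X)\to\mathrm{M}_{n+k}(\mathrm{C}(X^d))$ are the unital homomorphisms $$\phi_0(f)=\mathrm{diag}(f\circ\pi_1,\dots,f\circ\pi_n,f(x_1),\dots,f(x_k)),\quad \phi_1(f)=\mathrm{diag}(f\circ\pi_1,\dots,f\circ\pi_n,f(y_1),\dots,f(y_k)),$$ such that $\tau(\phi_0(h))>\Delta(h)$ and $\tau(\phi_1(h))>\Delta(h)$ for all $h\in\mathcal H_0$ and all $\tau\in\mathrm{T}(\mathrm{M}_{n+k}(\mathrm{C}(X^d)))$, and $|\tau(\phi_0(h)-\phi_1(h))|<\delta$ for all $h\in\mathcal H_1$ and all $\tau\in\mathrm{T}(\mathrm{M}_{n+k}(\mathrm{C}(X^d)))$, there is a unitary $u\in\mathrm{M}_{n+k}(\mathrm{C}(X^d))$ with $\|\phi_0(f)-u^*\phi_1(f)u\|<\varepsilon$ for all $f\in\mathcal F$.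
   Context: $\mathrm{C}^+_1(X)$ is the set of positive functions in $\mathrm{C}(X)$ of norm at most $1$. A coordinate projection $X^d\to X$ is a map $(z_1,\dots,z_d)\mapsto z_j$. Constants $f(x)$ are regarded as constant functions. $\mathrm{T}(B)$ denotes the tracial state space of $B$. *)

From HB Require Import structures.
From mathcomp Require Import all_boot all_order all_algebra.
From mathcomp Require Import all_classical all_reals all_analysis.
From mathcomp.real_closed Require Import complex.
Import Order.TTheory GRing.Theory Num.Theory.

Set Implicit Arguments.
Unset Strict Implicit.
Unset Printing Implicit Defensive.

Local Open Scope ring_scope.
Local Open Scope classical_set_scope.
Local Open Scope complex_scope.

(* The complex numbers R[i] (for R : realType) with their usual metric
   topology, given by the modulus |z - w|. *)
HB.instance Definition _ (R : rcfType) :=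
  PseudoPointedMetric.copy R[i] (R[i] : numClosedFieldType)^o.

Section Defs.
Variable R : realType.

(* C^+_1(X): continuous functions X -> C with 0 <= h(x) <= 1 for all x
   (positive and of sup-norm at most 1). The order on R[i] is the usual
   partial order: z <= w iff w - z is real and nonnegative. *)
Definition C1plus (X : topologicalType) (h : X -> R[i]) : Prop :=
  continuous h /\ (forall x, 0 <= h x /\ h x <= 1).

Definition mx_cont (Y : topologicalType) (m : nat) (a : Y -> 'M[R[i]]_m) : Prop :=
  forall i j, continuous (fun y => a y i j).

Definition mx_adj (m : nat) (A : 'M[R[i]]_m) : 'M[R[i]]_m :=
  map_mx Num.conj A^T.

(* tracial states on the C*-algebra M_m(C(Y)) (elements: entrywise
   continuous matrix-valued functions, operations pointwise) *)
Definition tracial_state (Y : topologicalType) (m : nat)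
    (tau : (Y -> 'M[R[i]]_m) -> R[i]) : Prop :=
  [/\ (forall a b, mx_cont a -> mx_cont b ->
         tau (fun y => a y + b y) = tau a + tau b),
      (forall (c : R[i]) a, mx_cont a -> tau (fun y => c *: a y) = c * tau a),
      (forall a, mx_cont a -> 0 <= tau (fun y => mx_adj (a y) *m a y)),
      tau (fun _ => 1%:M) = 1 &
      (forall a b, mx_cont a -> mx_cont b ->
         tau (fun y => a y *m b y) = tau (fun y => b y *m a y))].

Definition vnorm (m : nat) (v : 'cV[R[i]]_m) : R :=
  Num.sqrt (\sum_(i < m) ((complex.Re (v i 0)) ^+ 2 + (complex.Im (v i 0)) ^+ 2)).

Definition opnorm (m : nat) (A : 'M[R[i]]_m) : R :=
  sup [set vnorm (A *m v) | v in [set v : 'cV[R[i]]_m | vnorm v <= 1]].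

Definition cnorm (Y : topologicalType) (m : nat) (a : Y -> 'M[R[i]]_m) : R :=
  sup [set opnorm (a y) | y in [set: Y]].

Definition unitary (Y : topologicalType) (m : nat) (u : Y -> 'M[R[i]]_m) : Prop :=
  mx_cont u /\
  (forall y, mx_adj (u y) *m u y = 1%:M /\ u y *m mx_adj (u y) = 1%:M).

(* phi(f) = diag(f o pi_1, ..., f o pi_n, f(x_1), ..., f(x_k)) in
   M_{n+k}(C(X^d)), where pi_i = the coordinate projection z |-> z (p i). *)
Definition phi_diag (X : topologicalType) (d n k : nat) (p : 'I_n -> 'I_d)
    (xs : 'I_k -> X) (f : X -> R[i]) : {ptws 'I_d -> X} -> 'M[R[i]]_(n + k) :=
  fun z => diag_mx (\row_(i < n + k)
                     match fintype.split i with
                     | inl a => f (z (p a))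
                     | inr b => f (xs b)
                     end).

End Defs.

From HB Require Import structures.
From mathcomp Require Import all_boot all_order all_algebra fingroup perm zify.

(* Choose eta so that every f in F moves by less than eps/2 on eta-balls, and a
   finite r-net (w_i) of X with r = eta/8.  H_0 consists of Urysohn bumps b_i
   around the net points and H_1 of plateau functions g_J, equal to 1 near the
   net points indexed by J and supported in their 2r-neighbourhood; delta is the
   least Delta(b_i).  Only the normalised traces of evaluations at constant
   points of X^d are needed: they give
     \sum_b g_J(x_b) - \sum_c g_J(y_c) < \sum_c b_i(y_c)   whenever b_i(w_j) = 0.
   For a set S of indices let J index the net points r-close to {x_b | b in S}.
   By connectedness, either the net points 3r-close to J cover X up to r, and
   then every y_c is eta-close to some x_b with b in S, or some w_i lies at
   distance between 3r and 6r from J.  Then b_i and g_J have disjoint supports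
   inside the eta-neighbourhood of {x_b | b in S}, and
     |S| <= \sum_b g_J(x_b) < \sum_c (g_J + b_i)(y_c) <= #{c | y_c eta-close to S}.
   This is Hall's condition for the relation "x_b is eta-close to y_c"; a perfect
   matching, realised by a permutation matrix acting on the last k coordinates,
   conjugates phi_1 to within eps/2 of phi_0. *)

Set Implicit Arguments.
Unset Strict Implicit.
Unset Printing Implicit Defensive.

Section HallMarriage.
Variables (A B : finType) (e : A -> B -> bool).

Definition neighbours (M : {set B}) (S : {set A}) : {set B} :=
  [set b in M | [exists a in S, e a b]].

Definition hall_condition (L : {set A}) (M : {set B}) : Prop :=
  forall S : {set A}, S \subset L -> #|S| <= #|neighbours M S|.

Definition matching (f : A -> B) (L : {set A}) (M : {set B}) : Prop :=
  {in L &, injective f} /\ {in L, forall a, f a \in M /\ e a (f a)}.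

Lemma neighbours_sub (M : {set B}) (S : {set A}) : neighbours M S \subset M.
Proof. by apply/subsetP=> b; rewrite inE => /andP[]. Qed.

Lemma hall_conditionS (L S : {set A}) (M : {set B}) :
  hall_condition L M -> S \subset L -> hall_condition S M.
Proof. by move=> hLM sSL T sTS; apply/hLM/(subset_trans sTS). Qed.

Lemma matching_neighbours f (S : {set A}) (M : {set B}) :
  matching f S M -> matching f S (neighbours M S).
Proof.
case=> injf fS; split=> // a aS; have [fM eaf] := fS a aS.
by split=> //; rewrite inE fM; apply/existsP; exists a; rewrite aS.
Qed.

Lemma matching_widen f (L : {set A}) (M M' : {set B}) :
  M \subset M' -> matching f L M -> matching f L M'.
Proof.
move=> sMM' [injf fL]; split=> // a aL; have [fM eaf] := fL a aL.
by rewrite (subsetP sMM').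
Qed.

Lemma matching_glue (S L : {set A}) (M1 M2 : {set B}) f1 f2 :
  matching f1 S M1 -> matching f2 (L :\: S) M2 -> [disjoint M1 & M2] ->
  matching (fun a => if a \in S then f1 a else f2 a) L (M1 :|: M2).
Proof.
move=> [inj1 f1S] [inj2 f2LS] dM.
have LS a : a \in L -> a \notin S -> a \in L :\: S by rewrite inE => -> ->.
have cross a a' : a \in S -> a' \in L -> a' \notin S -> f1 a != f2 a'.
  move=> aS a'L a'S; have [f1M _] := f1S a aS.
  have [f2M _] := f2LS a' (LS a' a'L a'S).
  by apply: contraTneq f2M => <-; rewrite (disjointFr dM f1M).
split=> [a a' aL a'L /= | a aL].
  case: ifPn => aS; case: ifPn => a'S.
  - exact: inj1.
  - by move/eqP; rewrite (negbTE (cross a a' aS a'L a'S)).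
  - by move/eqP; rewrite eq_sym (negbTE (cross a' a a'S aL aS)).
  - by apply: inj2; apply: LS.
case: ifPn => aS; first by have [fM ->] := f1S a aS; rewrite inE fM.
by have [fM ->] := f2LS a (LS a aL aS); rewrite inE fM orbT.
Qed.

Lemma hall_condition_tight (L S : {set A}) (M : {set B}) :
  hall_condition L M -> S \subset L -> #|neighbours M S| <= #|S| ->
  hall_condition (L :\: S) (M :\: neighbours M S).
Proof.
move=> hLM sSL tight T sTLS.
have TS0 : T :&: S = set0.
  apply/setP=> a; rewrite !inE; apply/andP=> -[aT aS].
  by move: (subsetP sTLS a aT); rewrite inE aS.
have sub : neighbours M (T :|: S) \subset
           neighbours (M :\: neighbours M S) T :|: neighbours M S.
  apply/subsetP=> b; rewrite !inE => /andP[bM /existsP[a /andP[aTS eab]]].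
  case bS: [exists a in S, e a b]; rewrite bM ?orbT //= orbF.
  apply/existsP; exists a; rewrite eab andbT.
  move: aTS; rewrite inE => /orP[// | aS].
  by move/existsP: bS; case; exists a; rewrite aS.
have sTSL : T :|: S \subset L.
  by rewrite subUset sSL andbT (subset_trans sTLS) ?subsetDl.
have := leq_trans (hLM _ sTSL) (leq_trans (subset_leq_card sub) (leq_card_setU _ _)).
rewrite cardsU TS0 cards0 subn0; lia.
Qed.

Lemma hall_condition_loose (L : {set A}) (M : {set B}) a0 b1 :
  (forall S : {set A}, S \proper L -> S != set0 -> #|S| < #|neighbours M S|) ->
  a0 \in L -> hall_condition (L :\ a0) (M :\ b1).
Proof.
move=> loose a0L T sTL; have [-> | T_neq0] := eqVneq T set0; first by rewrite cards0.
have a0T : a0 \notin T by apply/negP => /(subsetP sTL); rewrite !inE eqxx.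
have pTL : T \proper L.
  rewrite properE (subset_trans sTL (subsetDl _ _)) /=.
  by apply: contra a0T => /subsetP; apply.
have sub : neighbours M T :\ b1 \subset neighbours (M :\ b1) T.
  by apply/subsetP=> b; rewrite !inE => /andP[-> /andP[-> ->]].
apply: leq_trans (subset_leq_card sub).
have := loose T pTL T_neq0; rewrite (cardsD1 b1 (neighbours M T)).
by case: (b1 \in _) => [/ltnSE | /ltnW].
Qed.

Theorem hall_marriage (b0 : B) (L : {set A}) (M : {set B}) :
  hall_condition L M -> exists f, matching f L M.
Proof.
have [N] := ubnP #|L|; elim: N => // N IH in L M *; rewrite ltnS => leLN hLM.
have [-> | [a0 a0L]] := set_0Vmem L.
  by exists (fun=> b0); split=> a; rewrite inE.
(* Either a proper nonempty S is tight, and S and L :\: S are matched separately,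
   or a0 can be matched to any of its neighbours. *)
have [/existsP[S /and3P[pSL S_neq0 tight]] | /existsPn loose] :=
  boolP [exists S : {set A}, [&& S \proper L, S != set0 & #|neighbours M S| <= #|S|]].
- have sSL := proper_sub pSL.
  have [f1 mf1] := IH S M (leq_trans (proper_card pSL) leLN) (hall_conditionS hLM sSL).
  have pLSL : L :\: S \proper L.
    rewrite properEneq subsetDl andbT; apply: contra S_neq0 => /eqP LS_eq.
    apply/eqP/setP=> a; rewrite inE; apply/negP => aS.
    by move: (subsetP sSL a aS); rewrite -LS_eq inE aS.
  have [f2 mf2] := IH _ _ (leq_trans (proper_card pLSL) leLN)
                          (hall_condition_tight hLM sSL tight).
  exists (fun a => if a \in S then f1 a else f2 a).
  apply: matching_widen (matching_glue (matching_neighbours mf1) mf2 _).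
    by rewrite subUset neighbours_sub subsetDl.
  by rewrite disjoints_subset; apply/subsetP => b bN; rewrite in_setC in_setD bN.
- have loose' (S : {set A}) : S \proper L -> S != set0 -> #|S| < #|neighbours M S|.
    by move=> pSL S_neq0; have := loose S; rewrite pSL S_neq0 /= -ltnNge.
  have [b1] : exists b1, b1 \in neighbours M [set a0].
    apply/set0Pn; rewrite -card_gt0.
    by apply: leq_trans (hLM _ _); rewrite ?cards1 ?sub1set.
  rewrite inE => /andP[b1M /existsP[_ /andP[/set1P-> ea0b1]]].
  have [f2 mf2] := IH _ _ (leq_trans (proper_card (properD1 a0L)) leLN)
                          (hall_condition_loose b1 loose' a0L).
  exists (fun a => if a \in [set a0] then b1 else f2 a).
  apply: matching_widen (matching_glue (M1 := [set b1]) _ mf2 _).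
  - by rewrite subUset sub1set b1M subsetDl.
  - by split=> [a a' | a]; rewrite !inE => /eqP ->; [move=> /eqP -> | rewrite eqxx].
  - by rewrite disjoints1 !inE eqxx.
Qed.

End HallMarriage.

Corollary hall_perfect_matching (T : finType) (adj : T -> T -> bool) :
  hall_condition adj setT setT -> exists s : {perm T}, forall a, adj a (s a).
Proof.
move=> hT; case: (pickP T) => [a0 _ | T0]; last by exists 1%g => a; have := T0 a.
have [f [injf fT]] := hall_marriage a0 hT.
have f_inj : injective f by move=> a a'; apply: injf; rewrite inE.
by exists (perm f_inj) => a; rewrite permE; have [_ ->] := fT a (in_setT a).
Qed.

(* Loaded only now: these libraries shadow the finset names used above. *)
From mathcomp Require Import all_classical all_reals all_analysis finmap.
From mathcomp.real_closed Require Import complex.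
From mathcomp.algebra_tactics Require Import ring lra.
Import Order.TTheory GRing.Theory Num.Theory.

Local Open Scope ring_scope.
Local Open Scope classical_set_scope.
Local Open Scope complex_scope.

Lemma seq_lbound_gt0 (R : realDomainType) (T : eqType) (s : seq T) (g : T -> R) :
  (forall x, x \in s -> 0 < g x) ->
  exists2 eta, 0 < eta & forall x, x \in s -> eta <= g x.
Proof.
elim: s => [|a s IH] g_gt0; first by exists 1 => // x; rewrite in_nil.
have [eta eta_gt0 eta_le] := IH (fun x xs => g_gt0 x (@mem_behead _ (a :: s) x xs)).
exists (Order.min (g a) eta) => [|x]; first by rewrite lt_min g_gt0 ?mem_head.
by rewrite in_cons => /predU1P[-> | xs]; rewrite ge_min ?lexx // eta_le ?orbT.
Qed.

Lemma connected_open_cover (T : topologicalType) (U V : set T) :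
  connected [set: T] -> open U -> open V -> U !=set0 ->
  (forall x, U x \/ V x) -> (forall x, U x -> V x -> False) -> U = setT.
Proof.
move=> conn oU oV U_neq0 UV disj; apply: conn => //.
  by exists U => //; rewrite setTI.
exists (~` V); first exact: open_closedC.
rewrite setTI; apply/seteqP; split=> x; last by case: (UV x).
by move=> Ux Vx; apply: disj Ux Vx.
Qed.

(* The library's [compact_cover] is stated for pointed spaces. *)
Lemma compact_cover_compact (T : topologicalType) :
  compact [set: T] -> cover_compact [set: T].
Proof.
move=> cpt; have [[x0 _] | T0] := pselect (exists x : T, True); last first.
  by move=> I D f _ _; exists fset0 => // x; exfalso; apply: T0; exists x.
pose PT : ptopologicalType := HB.pack_for ptopologicalType T (isPointed.Build T x0).
have cover_eq := @compact_cover PT.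
have : @compact PT [set: PT] by exact: cpt.
by rewrite cover_eq.
Qed.

Definition realC_fun {R : realType} {T : Type} (g : T -> R) : T -> R[i] :=
  fun x => (g x)%:C.

Section ComplexMatrices.
Import numFieldNormedType.Exports.
Variable R : realType.
Local Notation C := R[i].

Lemma realC_continuous : continuous (fun r : R => r%:C : C).
Proof.
move=> x; apply/cvg_ballP => e e_gt0.
have [e_re e_im] : e = (complex.Re e)%:C /\ 0 < complex.Re e.
  by move: e_gt0; rewrite ltcE => /andP[/eqP]; case: e => a b /= ->.
rewrite e_re; apply: filterS (nbhsx_ballx x _ e_im) => y.
by rewrite /ball /= -raddfB /= normc_def /= expr0n addr0 sqrtr_sqr ltcR.
Qed.

Lemma C1plus_realC_fun (T : topologicalType) (g : T -> R) :
  continuous g -> (forall x, 0 <= g x <= 1) -> C1plus (realC_fun g).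
Proof.
move=> g_cont g01; split=> [x | x].
  by apply: continuous_comp; [exact: g_cont | exact: realC_continuous].
by have /andP[g0 g1] := g01 x; rewrite /realC_fun ler0c -[1]/(1%:C) lecR.
Qed.

Definition sqmod (z : C) : R := complex.Re z ^+ 2 + complex.Im z ^+ 2.

Lemma sqmodE z : (sqmod z)%:C = `|z| ^+ 2.
Proof. by rewrite /sqmod add_Re2_Im2. Qed.

Lemma sqmod_ge0 z : 0 <= sqmod z.
Proof. by rewrite /sqmod addr_ge0 // sqr_ge0. Qed.

Lemma sqmodM a b : sqmod (a * b) = sqmod a * sqmod b.
Proof. by apply: (@complexI R); rewrite rmorphM /= !sqmodE normrM exprMn. Qed.

Lemma sqmod_le z (c : R) : `|z| <= c%:C -> sqmod z <= c ^+ 2.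
Proof.
move=> zc; rewrite -lecR sqmodE rmorphXn /=.
by rewrite ler_pXn2r ?nnegrE // (le_trans _ zc).
Qed.

Lemma opnorm_diag_mx_le m (d : 'rV[C]_m) (c : R) : 0 <= c ->
  (forall i, sqmod (d 0 i) <= c ^+ 2) -> opnorm (diag_mx d) <= c.
Proof.
move=> c_ge0 dc; apply: ge_sup => [|_ [v /= v_le1 <-]].
  exists (vnorm (diag_mx d *m 0)), 0 => //=.
  by rewrite /vnorm big1 ?sqrtr0 // => i _; rewrite mxE expr0n addr0.
have sum_v_le1 : \sum_i sqmod (v i 0) <= 1.
  have sum_ge0 : 0 <= \sum_i sqmod (v i 0) by apply: sumr_ge0 => i _; apply: sqmod_ge0.
  by rewrite -(sqr_sqrtr sum_ge0) -(expr1n _ 2%N) ler_pXn2r ?nnegrE ?sqrtr_ge0.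
rewrite /vnorm -[leRHS](ger0_norm c_ge0) -sqrtr_sqr; apply: ler_wsqrtr.
apply: le_trans (_ : \sum_i c ^+ 2 * sqmod (v i 0) <= _).
  apply: ler_sum => i _; rewrite mul_diag_mx mxE -/(sqmod _) sqmodM.
  by apply: ler_wpM2r; [apply: sqmod_ge0 | apply: dc].
by rewrite -mulr_sumr -[leRHS]mulr1 ler_wpM2l ?sqr_ge0.
Qed.

Lemma cnorm_le (Y : topologicalType) m (a : Y -> 'M[C]_m) (c : R) (y0 : Y) :
  (forall y, opnorm (a y) <= c) -> cnorm a <= c.
Proof.
by move=> ac; apply: ge_sup => [|_ [y _ <-]]; [exists (opnorm (a y0)), y0 | apply: ac].
Qed.

Lemma mx_adj_perm_mx m (s : {perm 'I_m}) : mx_adj (perm_mx s : 'M[C]_m) = perm_mx s^-1.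
Proof.
apply/matrixP=> i j; rewrite /mx_adj tr_perm_mx !mxE.
by case: (_ == _); rewrite ?conjC0 ?conjC1.
Qed.

Lemma unitary_perm_mx (Y : topologicalType) m (s : {perm 'I_m}) :
  unitary (fun _ : Y => (perm_mx s : 'M[C]_m)).
Proof.
split=> [i j | _]; first exact: cst_continuous.
by rewrite mx_adj_perm_mx -!perm_mxM mulgV mulVg perm_mx1.
Qed.

Lemma perm_mx_conj_diag m (s : {perm 'I_m}) (d : 'rV[C]_m) :
  perm_mx s *m diag_mx d *m perm_mx s^-1 = diag_mx (\row_i d 0 (s i)).
Proof.
apply/matrixP=> i j; rewrite -row_permE -col_permE !mxE.
by rewrite (inj_eq perm_inj).
Qed.

Definition eval_trace (Y : Type) m (y : Y) (a : Y -> 'M[C]_m) : C :=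
  (m%:R)^-1 * \tr (a y).

Lemma eval_trace_tracial (Y : topologicalType) m (y : Y) :
  (0 < m)%N -> tracial_state (@eval_trace Y m y).
Proof.
move=> m_gt0; split=> [a b _ _ | c a _ | a _ | | a b _ _].
- by rewrite /eval_trace mxtraceD mulrDr.
- by rewrite /eval_trace mxtraceZ mulrCA.
- rewrite /eval_trace mulr_ge0 ?invr_ge0 ?ler0n // /mxtrace sumr_ge0 // => i _.
  rewrite mxE sumr_ge0 // => j _; rewrite /mx_adj !mxE mulrC; exact: mul_conjC_ge0.
- by rewrite /eval_trace mxtrace1 mulVf // pnatr_eq0 -lt0n.
- by rewrite /eval_trace mxtrace_mulC.
Qed.

End ComplexMatrices.

Lemma split_lshift m n (a : 'I_m) : fintype.split (lshift n a) = inl a.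
Proof. exact: (unsplitK (inl a : 'I_m + 'I_n)). Qed.

Lemma split_rshift m n (b : 'I_n) : fintype.split (rshift m b) = inr b.
Proof. exact: (unsplitK (inr b : 'I_m + 'I_n)). Qed.

Section RshiftPerm.
Variables (n k : nat) (s : {perm 'I_k}).

Definition rshift_perm_fun (i : 'I_(n + k)) : 'I_(n + k) :=
  match fintype.split i with inl a => lshift k a | inr b => rshift n (s b) end.

Lemma rshift_perm_fun_inj : injective rshift_perm_fun.
Proof.
move=> i j; rewrite -(splitK i) -(splitK j) /rshift_perm_fun.
case: (fintype.split i) (fintype.split j) => [a|b] [a'|b'] /=;
  rewrite ?split_lshift ?split_rshift => /eqP;
  by rewrite ?eq_lshift ?eq_rshift ?eq_lrshift ?eq_rlshift ?(inj_eq perm_inj)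
     => // /eqP->.
Qed.

Definition rshift_perm : {perm 'I_(n + k)} := perm rshift_perm_fun_inj.

End RshiftPerm.

Section PhiDiag.
Variables (R : realType) (X : topologicalType) (d n k : nat) (p : 'I_n -> 'I_d).
Local Notation C := R[i].

Lemma phi_diag_perm_conj (ys : 'I_k -> X) (s : {perm 'I_k}) (f : X -> C) z :
  perm_mx (rshift_perm n s) *m phi_diag p ys f z *m perm_mx (rshift_perm n s)^-1 =
  phi_diag p (ys \o s) f z.
Proof.
rewrite perm_mx_conj_diag; congr diag_mx; apply/rowP=> i; rewrite !mxE permE.
rewrite /rshift_perm_fun.
by case: (fintype.split i) => [a|b]; rewrite ?split_lshift ?split_rshift.
Qed.

Lemma mxtrace_phi_diag (xs : 'I_k -> X) (h : X -> C) z :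
  \tr (phi_diag p xs h z) = \sum_(a < n) h (z (p a)) + \sum_(b < k) h (xs b).
Proof.
rewrite /phi_diag mxtrace_diag big_split_ord /=.
by congr (_ + _); apply: eq_bigr => i _; rewrite mxE ?split_lshift ?split_rshift.
Qed.

Lemma eval_trace_phi_diag (xs : 'I_k -> X) (g : X -> R) (x0 : X) :
  eval_trace ((fun _ => x0) : {ptws 'I_d -> X}) (phi_diag p xs (realC_fun g)) =
  ((n + k)%:R^-1 * (g x0 *+ n + \sum_b g (xs b)))%:C.
Proof.
rewrite /eval_trace mxtrace_phi_diag /realC_fun sumr_const card_ord -rmorph_sum.
rewrite [RHS]rmorphM (rmorphD (real_complex R)) (raddfMn (real_complex R)).
by rewrite fmorphV rmorph_nat.
Qed.

Lemma cnorm_phi_diag_sub_le (xs ys : 'I_k -> X) (f : X -> C) (c : R) (x0 : X) :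
  0 <= c -> (forall b, `|f (xs b) - f (ys b)| <= c%:C) ->
  cnorm (fun z => phi_diag p xs f z - phi_diag p ys f z) <= c.
Proof.
move=> c_ge0 fc; apply: (cnorm_le ((fun _ => x0) : {ptws 'I_d -> X})) => z.
rewrite /phi_diag -linearB /=; apply: opnorm_diag_mx_le => // i; rewrite !mxE.
by case: (fintype.split i) => [a|b]; apply: sqmod_le; rewrite ?subrr ?normr0 ?ler0c.
Qed.

Lemma cnorm_phi_diag_perm_conj_le (xs ys : 'I_k -> X) (s : {perm 'I_k})
    (f : X -> C) (c : R) (x0 : X) :
  0 <= c -> (forall b, `|f (xs b) - f (ys (s b))| <= c%:C) ->
  cnorm (fun z => phi_diag p xs f z - mx_adj (perm_mx (rshift_perm n s)^-1) *m
                  phi_diag p ys f z *m perm_mx (rshift_perm n s)^-1) <= c.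
Proof.
move=> c_ge0 fc; rewrite mx_adj_perm_mx invgK.
suff -> : (fun z => phi_diag p xs f z -
    perm_mx (rshift_perm n s) *m phi_diag p ys f z *m perm_mx (rshift_perm n s)^-1) =
    (fun z => phi_diag p xs f z - phi_diag p (ys \o s) f z).
  exact: cnorm_phi_diag_sub_le.
by apply/funext => z; rewrite phi_diag_perm_conj.
Qed.

Lemma tracial_tests_gap (xs ys : 'I_k -> X) (g b : X -> R) (x0 : X) (delta D : R) :
  (0 < n + k)%N ->
  (forall tau, tracial_state tau ->
     `|tau (fun z => phi_diag p xs (realC_fun g) z - phi_diag p ys (realC_fun g) z)|
       < delta%:C) ->
  (forall tau, tracial_state tau -> D%:C < tau (phi_diag p ys (realC_fun b))) ->
  delta <= D -> b x0 = 0 ->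
  \sum_c g (xs c) - \sum_c g (ys c) < \sum_c b (ys c).
Proof.
move=> nk_gt0 small_gap big_mass deltaD bx0.
(* Test both hypotheses on the trace of the evaluation at the point (x0, ..., x0). *)
pose z0 : {ptws 'I_d -> X} := fun _ => x0.
have tau_tr := eval_trace_tracial R z0 nk_gt0.
have N_gt0 : 0 < ((n + k)%:R^-1 : R) by rewrite invr_gt0 ltr0n.
rewrite -(ltr_pM2l N_gt0).
have := big_mass _ tau_tr; rewrite /z0 eval_trace_phi_diag bx0 mul0rn add0r ltcR.
have := small_gap _ tau_tr; rewrite /eval_trace linearB mulrBr -!/(eval_trace _ _).
rewrite /z0 !eval_trace_phi_diag -rmorphB -mulrBr opprD addrACA subrr add0r.
move=> /(le_lt_trans (normc_ge_Re _)); rewrite ltcR /= => gap mass.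
have := ler_norm ((n + k)%:R^-1 * (\sum_c g (xs c) - \sum_c g (ys c))); lra.
Qed.

End PhiDiag.

Section PseudoMetric.
Import numFieldNormedType.Exports.
Variables (R : realType) (X : pseudoMetricType R).
Local Notation C := R[i].

Lemma ball_trans_le (x y z : X) (e1 e2 e : R) :
  e1 + e2 <= e -> ball x e1 y -> ball y e2 z -> ball x e z.
Proof. by move=> le_e xy yz; apply: (le_ball le_e); apply: ball_triangle xy yz. Qed.

(* Balls of a [pseudoMetricType] need not be open, hence the interiors. *)
Lemma compact_ball_net (r : R) : compact [set: X] -> 0 < r ->
  exists m (w : 'I_m -> X), forall x, exists i, (ball (w i) r)° x.
Proof.
move=> cpt r_gt0.
have [|x _|D _ cov] := @compact_cover_compact _ cpt X setT (fun w => (ball w r)°).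
- by move=> w _; apply: open_interior.
- by exists x => //; apply: nbhsx_ballx.
pose s := enum_fset D; exists (size s), (fun i => tnth (in_tuple s) i) => x.
have [w wD xw] := cov x I; have /tnthP[i w_eq] : w \in in_tuple s by [].
by exists i; rewrite -w_eq.
Qed.

Lemma compact_unif_cont (f : X -> C) (e : R) :
  compact [set: X] -> continuous f -> 0 < e ->
  exists2 eta, 0 < eta & forall x y, ball x eta y -> `|f x - f y| < e%:C.
Proof.
move=> cpt f_cont e_gt0; have e2_gt0 : 0 < e / 2 by rewrite divr_gt0.
have local x : exists rho, 0 < rho /\
    forall y, ball x (rho + rho) y -> `|f x - f y| < (e / 2)%:C.
  have /nbhs_ballP[rho rho_gt0 near_x] : \forall y \near x, `|f x - f y| < (e / 2)%:C.
    by move/cvg_ballP: (f_cont x) => /(_ (e / 2)%:C); rewrite ltcR; apply.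
  exists (rho / 2); split; first by rewrite divr_gt0.
  by move=> y; rewrite -splitr => /near_x.
have [rho rhoP] := choice local.
have [|x _|D _ cov] := @compact_cover_compact _ cpt X setT (fun x => (ball x (rho x))°).
- by move=> x _; apply: open_interior.
- by exists x => //; apply/nbhsx_ballx/(rhoP x).1.
have [eta eta_gt0 eta_le] :=
  seq_lbound_gt0 (fun x (_ : x \in enum_fset D) => (rhoP x).1).
exists eta => // a b ab; have [w wD /interior_subset wa] := cov a I.
have [rho_gt0 close_w] := rhoP w.
have fwa := close_w a (le_ball (ler_wpDl (ltW rho_gt0) (lexx _)) wa).
have fwb : `|f w - f b| < (e / 2)%:C.
  by apply: close_w; apply: ball_trans_le wa ab; rewrite lerD2l eta_le.
have -> : f a - f b = (f w - f b) - (f w - f a) by ring.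
by apply: le_lt_trans (ler_normB _ _) _; rewrite (splitr e) rmorphD ltrD.
Qed.

Lemma finite_unif_cont (F : set (X -> C)) (e : R) :
  compact [set: X] -> finite_set F -> (forall f, F f -> continuous f) -> 0 < e ->
  exists2 eta, 0 < eta &
    forall f, F f -> forall x y, ball x eta y -> `|f x - f y| < e%:C.
Proof.
move=> cpt /finite_fsetP[Fs ->] F_cont e_gt0.
have unif f : exists eta, 0 < eta /\
    (f \in Fs -> forall x y, ball x eta y -> `|f x - f y| < e%:C).
  have [fFs | _] := boolP (f \in Fs); last by exists 1.
  by have [eta eta_gt0 ?] := compact_unif_cont cpt (F_cont f fFs) e_gt0; exists eta.
have [eta etaP] := choice unif.
have [eta0 eta0_gt0 eta0_le] :=
  seq_lbound_gt0 (fun f (_ : f \in enum_fset Fs) => (etaP f).1).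
exists eta0 => // f fFs x y xy; apply: (etaP f).2 => //.
exact: (le_ball (eta0_le f fFs)) xy.
Qed.

Lemma urysohn_apart (A B : set X) (r : R) : 0 < r ->
  (forall a b, A a -> B b -> ~ ball a r b) ->
  exists g : X -> R, [/\ continuous g, (forall x, 0 <= g x <= 1),
    (forall x, A x -> g x = 0) & (forall x, B x -> g x = 1)].
Proof.
move=> r_gt0 AB_apart.
have sep : uniform_separator A B.
  apply: uniform_separatorW; exists [set xy : X * X | ball xy.1 r xy.2].
    exact: (@entourage_ball R X (PosNum r_gt0)).
  by apply/seteqP; split=> // -[a b] [[/= Aa Bb] ab]; apply: AB_apart Aa Bb ab.
exists (Urysohn A B); split=> [|x|x Ax|x Bx].
- exact: Urysohn_continuous.
- by have := @Urysohn_range X R A B _ (ex_intro2 _ _ x I erefl); rewrite /= in_itv.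
- by apply: (Urysohn_sub0 sep); exists x.
- by apply: (Urysohn_sub1 sep); exists x.
Qed.

Lemma exists_bump (w : X) (r : R) : 0 < r ->
  exists g : X -> R, [/\ continuous g, (forall x, 0 <= g x <= 1),
    (forall x, ~ ball w r x -> g x = 0) & g w = 1].
Proof.
move=> r_gt0.
have [|g [g_cont g01 g0 g1]] := @urysohn_apart [set x | ~ ball w r x] [set w] r r_gt0.
  by move=> a b wa -> ab; apply: wa (ball_sym ab).
by exists g; split=> //; apply: g1.
Qed.

Lemma exists_plateau m (w : 'I_m -> X) (r : R) (J : {set 'I_m}) : 0 < r ->
  exists g : X -> R, [/\ continuous g, (forall x, 0 <= g x <= 1),
    (forall x, (forall j, j \in J -> ~ ball (w j) (2 * r) x) -> g x = 0) &
    (forall x j, j \in J -> ball (w j) r x -> g x = 1)].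
Proof.
move=> r_gt0.
have [|g [g_cont g01 g0 g1]] := @urysohn_apart
    [set x | forall j, j \in J -> ~ ball (w j) (2 * r) x]
    [set x | exists2 j, j \in J & ball (w j) r x] r r_gt0.
  move=> a b far_a [j jJ jb] ab; apply: (far_a j jJ).
  by apply: ball_trans_le jb (ball_sym ab); lra.
by exists g; split=> // x j jJ jx; apply: g1; exists j.
Qed.

Lemma connected_net_dichotomy m (w : 'I_m -> X) (r : R) (J : {set 'I_m}) j0 :
  connected [set: X] -> 0 < r -> (forall x, exists i, (ball (w i) r)° x) ->
  j0 \in J ->
  (exists i, (forall j, j \in J -> ~ ball (w j) (3 * r) (w i)) /\
             exists2 j, j \in J & ball (w j) (6 * r) (w i)) \/
  (forall x, exists i j, [/\ j \in J, ball (w j) (3 * r) (w i) & ball (w i) r x]).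
Proof.
move=> conn r_gt0 net j0J.
have [? | no_shell] := pselect (exists i,
  (forall j, j \in J -> ~ ball (w j) (3 * r) (w i)) /\
  exists2 j, j \in J & ball (w j) (6 * r) (w i)); [by left | right].
pose close i := exists2 j, j \in J & ball (w j) (3 * r) (w i).
pose far i := forall j, j \in J -> ~ ball (w j) (6 * r) (w i).
have close_or_far i : close i \/ far i.
  have [c | nc] := pselect (close i); [by left | right => j jJ ji].
  apply: no_shell; exists i; split=> [j' j'J j'i | ]; last by exists j.
  by apply: nc; exists j'.
pose U := \bigcup_(i in close) (ball (w i) r)°.
pose V := \bigcup_(i in far) (ball (w i) r)°.
have U_open : open U by apply: bigcup_open => i _; apply: open_interior.
have V_open : open V by apply: bigcup_open => i _; apply: open_interior.
have U_neq0 : U !=set0.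
  have [i0 i0j0] := net (w j0); exists (w j0), i0 => //; exists j0 => //.
  by apply: le_ball (ball_sym (interior_subset i0j0)); lra.
have UV_cover x : U x \/ V x.
  by have [i xi] := net x; case: (close_or_far i) => ?; [left | right]; exists i.
have UV_disj x : U x -> V x -> False.
  move=> [i [j jJ ji] /interior_subset ix] [i' far_i' /interior_subset i'x].
  have jx : ball (w j) (4 * r) x by apply: ball_trans_le ji ix; lra.
  by apply: (far_i' j jJ); apply: ball_trans_le jx (ball_sym i'x); lra.
move=> x; have : U x.
  by rewrite (connected_open_cover conn U_open V_open U_neq0 UV_cover UV_disj).
by case=> i [j jJ ji] /interior_subset ix; exists i, j.
Qed.

End PseudoMetric.

Section NetMatching.
Variables (R : realType) (X : pseudoMetricType R).
Hypothesis X_conn : connected [set: X].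
Variables (m : nat) (w : 'I_m -> X) (r : R).
Hypothesis net : forall x, exists i, (ball (w i) r)° x.
Variables (bump : 'I_m -> X -> R) (plateau : {set 'I_m} -> X -> R).
Hypothesis bump01 : forall i x, 0 <= bump i x <= 1.
Hypothesis bump_out : forall i x, ~ ball (w i) r x -> bump i x = 0.
Hypothesis plateau01 : forall J x, 0 <= plateau J x <= 1.
Hypothesis plateau_out : forall (J : {set 'I_m}) x,
  (forall j, j \in J -> ~ ball (w j) (2 * r) x) -> plateau J x = 0.
Hypothesis plateau_in : forall (J : {set 'I_m}) x j,
  j \in J -> ball (w j) r x -> plateau J x = 1.
Variables (k : nat) (xs ys : 'I_k -> X).
Hypothesis mass_gap : forall (J : {set 'I_m}) i j, bump i (w j) = 0 ->
  \sum_b plateau J (xs b) - \sum_b plateau J (ys b) < \sum_c bump i (ys c).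

Definition close_pair (b c : 'I_k) : bool := `[< ball (xs b) (8 * r) (ys c) >].

Local Notation close_nbrs S := (neighbours close_pair finset.setT S).

Definition net_hull (S : {set 'I_k}) : {set 'I_m} :=
  [set j | `[< exists2 b, b \in S & ball (w j) r (xs b) >]].

Lemma net_hullP (S : {set 'I_k}) j :
  reflect (exists2 b, b \in S & ball (w j) r (xs b)) (j \in net_hull S).
Proof. by rewrite inE; apply: asboolP. Qed.

Lemma close_nbrsP (S : {set 'I_k}) b c :
  b \in S -> ball (xs b) (8 * r) (ys c) -> c \in close_nbrs S.
Proof.
by move=> bS bc; rewrite !inE; apply/existsP; exists b; rewrite bS; apply/asboolP.
Qed.

Lemma card_le_sum_plateau (S : {set 'I_k}) :
  (#|S|%:R : R) <= \sum_b plateau (net_hull S) (xs b).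
Proof.
rewrite -sumr_const big_mkcond /=; apply: ler_sum => b _.
case: ifPn => bS; last by case/andP: (plateau01 (net_hull S) (xs b)).
have [j /interior_subset jb] := net (xs b).
by rewrite (@plateau_in _ _ j) //; apply/net_hullP; exists b.
Qed.

Lemma plateau_bump_le_close (S : {set 'I_k}) i j1 c : 0 < r ->
  (forall j, j \in net_hull S -> ~ ball (w j) (3 * r) (w i)) ->
  j1 \in net_hull S -> ball (w j1) (6 * r) (w i) ->
  plateau (net_hull S) (ys c) + bump i (ys c) <= (c \in close_nbrs S)%:R.
Proof.
move=> r_gt0 far_i j1S j1i; have /andP[_ bump_le1] := bump01 i (ys c).
have /andP[_ plateau_le1] := plateau01 (net_hull S) (ys c).
have [[j jS jc] | far_c] :=
  pselect (exists2 j, j \in net_hull S & ball (w j) (2 * r) (ys c)).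
  have [b bS jb] := net_hullP S j jS.
  have cS : c \in close_nbrs S.
    by apply: (close_nbrsP bS); apply: ball_trans_le (ball_sym jb) jc; lra.
  rewrite cS bump_out ?addr0 // => ic; apply: (far_i j jS).
  by apply: ball_trans_le jc (ball_sym ic); lra.
rewrite plateau_out ?add0r => [|j jS jc]; last by apply: far_c; exists j.
have [ic | /bump_out->] := pselect (ball (w i) r (ys c)); last by case: (_ \in _).
have [b bS j1b] := net_hullP S j1 j1S.
have bi : ball (xs b) (7 * r) (w i) by apply: ball_trans_le (ball_sym j1b) j1i; lra.
by rewrite (close_nbrsP bS) //; apply: ball_trans_le bi ic; lra.
Qed.

Lemma net_hall_condition : 0 < r -> hall_condition close_pair finset.setT finset.setT.
Proof.
move=> r_gt0 S _; have [-> | [b0 b0S]] := set_0Vmem S; first by rewrite cards0.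
have [j0 /interior_subset j0b0] := net (xs b0).
have j0S : j0 \in net_hull S by apply/net_hullP; exists b0.
have [[i [far_i [j1 j1S j1i]]] | covered] :=
  connected_net_dichotomy X_conn r_gt0 net j0S; last first.
  suff -> : close_nbrs S = finset.setT by rewrite cardsT max_card.
  apply/setP=> c; rewrite finset.in_setT; have [i [j [jS ji ic]]] := covered (ys c).
  have [b bS jb] := net_hullP S j jS.
  have bi : ball (xs b) (4 * r) (w i) by apply: ball_trans_le (ball_sym jb) ji; lra.
  by apply: (close_nbrsP bS); apply: ball_trans_le bi ic; lra.
have bump_i_j1 : bump i (w j1) = 0.
  apply: bump_out => ij1; apply: (far_i j1 j1S).
  by apply: le_ball (ball_sym ij1); lra.
have close_mass :
    \sum_c (plateau (net_hull S) (ys c) + bump i (ys c)) <= #|close_nbrs S|%:R.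
  rewrite -sumr_const [leRHS]big_mkcond /=; apply: ler_sum => c _.
  by have := plateau_bump_le_close c r_gt0 far_i j1S j1i; case: (_ \in _).
have := mass_gap (net_hull S) bump_i_j1; have := card_le_sum_plateau S.
by rewrite big_split /= in close_mass; rewrite -(ler_nat R); lra.
Qed.

End NetMatching.

Theorem theorem5p1 (R : realType) (X : pseudoMetricType R)
  (X_haus : hausdorff_space X) (X_cpt : compact [set: X])
  (X_conn : connected [set: X])
  (Delta : (X -> R[i]) -> R)
  (Delta_range : forall h, C1plus h -> 0 < Delta h <= 1)
  (Delta_mono : forall h h', C1plus h -> C1plus h' ->
     (forall x, h x <= h' x) -> Delta h <= Delta h') :
  forall (F : set (X -> R[i])) (eps : R),
    finite_set F -> (forall f, F f -> continuous f) -> 0 < eps ->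
  exists (H0 H1 : set (X -> R[i])) (delta : R),
    [/\ finite_set H0 /\ finite_set H1,
        (forall h, H0 h -> C1plus h /\ h <> (fun _ => 0)),
        (forall h, H1 h -> C1plus h), 0 < delta &
    forall (n k d : nat), (0 < n)%N -> (0 < k)%N -> (0 < d)%N ->
    forall (p : 'I_n -> 'I_d) (xs ys : 'I_k -> X),
      (forall tau : ({ptws 'I_d -> X} -> 'M[R[i]]_(n + k)) -> R[i],
         tracial_state tau -> forall h, H0 h ->
           (Delta h)%:C < tau (phi_diag p xs h) /\
           (Delta h)%:C < tau (phi_diag p ys h)) ->
      (forall tau : ({ptws 'I_d -> X} -> 'M[R[i]]_(n + k)) -> R[i],
         tracial_state tau -> forall h, H1 h ->
           `|tau (fun z => phi_diag p xs h z - phi_diag p ys h z)| < delta%:C) ->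
      exists u : {ptws 'I_d -> X} -> 'M[R[i]]_(n + k),
        unitary u /\
        forall f, F f ->
          cnorm (fun z => phi_diag p xs f z
                          - mx_adj (u z) *m phi_diag p ys f z *m u z) < eps].
Proof.
move=> F eps F_fin F_cont eps_gt0.
have [eta eta_gt0 F_unif] :=
  finite_unif_cont X_cpt F_fin F_cont (divr_gt0 eps_gt0 (ltr0n _ 2)).
pose r := eta / 8; have r_gt0 : 0 < r by rewrite divr_gt0.
have eta_eq : 8 * r = eta by rewrite /r mulrC divfK ?pnatr_eq0.
have [m [w net]] := compact_ball_net X_cpt r_gt0.
have [bump bumpP] := choice (fun i => exists_bump (w i) r_gt0).
have [plateau plateauP] := choice (fun J : {set 'I_m} => exists_plateau w J r_gt0).
have bump_C1 i : C1plus (realC_fun (bump i)).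
  by have [? ? _ _] := bumpP i; apply: C1plus_realC_fun.
have [delta delta_gt0 delta_le] := seq_lbound_gt0
  (fun i (_ : i \in enum 'I_m) => proj1 (andP (Delta_range _ (bump_C1 i)))).
exists (range (realC_fun \o bump)), (range (realC_fun \o plateau)), delta; split=> //.
- by split; apply: finite_image; apply: finite_finset.
- move=> _ [i _ <-]; split; first exact: bump_C1.
  have [_ _ _ bump1] := bumpP i.
  move/(congr1 (fun h => h (w i))); rewrite /= /realC_fun bump1.
  by move/complexI/eqP; rewrite oner_eq0.
- by move=> _ [J _ <-]; have [? ? _ _] := plateauP J; apply: C1plus_realC_fun.
move=> n k d n_gt0 k_gt0 _ p xs ys H0_mass H1_gap.
have [s s_close] : exists s : {perm 'I_k}, forall b, close_pair r xs ys b (s b).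
  apply/hall_perfect_matching/(net_hall_condition (bump := bump) (plateau := plateau)
    X_conn net) => //; try by [move=> i; case: (bumpP i) | move=> J; case: (plateauP J)].
  move=> J i j bump_ij; apply: (tracial_tests_gap (p := p) (x0 := w j) (delta := delta)
    (D := Delta (realC_fun (bump i)))) bump_ij; first by rewrite addn_gt0 n_gt0.
  - by move=> tau tau_tr; apply: H1_gap => //; exists J.
  - by move=> tau tau_tr; have [] := H0_mass tau tau_tr _ (imageT _ i).
  - by apply: delta_le; rewrite mem_enum.
exists (fun _ => perm_mx (rshift_perm n s)^-1); split; first exact: unitary_perm_mx.
move=> f Ff /=; apply: (le_lt_trans (cnorm_phi_diag_perm_conj_le p (c := eps / 2)
  (xs (Ordinal k_gt0)) _ _)); [lra | move=> b | lra].
by apply/ltW/F_unif => //; rewrite -eta_eq; apply/asboolP/s_close.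
Qed.
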